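(* Let $B_1,B_2$ be compact curves of genus at least two, let $g$ be the genus of $B_2$, and let $\mathcal A=(D_1\cup\dots\cup D_m,d,\{(t_i,r_i,n_i)\}_{i=1}^m)$ be a simple Galois admissible configuration for $B_1\times B_2$. If $m\le3(g-1)$, then $\nu(\mathcal A)\le2+\frac23$, with equality if and only if $m=3(g-1)$ and $r_i=3$ for all $i$.
   Context: A simple Galois admissible configuration for $B_1\times B_2$ consists of: pairwise disjoint curves $D_1,\dots,D_m\subset B_1\times B_2$, each the graph of an étale map $B_1\to B_2$; a positive integer $d$; and for each $i$ positive integers $t_i,n_i$ and $r_i\ge2$ with $d=t_in_ir_i$. Its abstract slope is $$\nu(\mathcal A)=2+\frac{-\sum_{i=1}^m t_in_i\frac{(r_i-1)(r_i+1)}{r_i}e(D_i)}{d\,e(B_1\times B_2)-\sum_{i=1}^m\beta_ie(D_i)},\qquad \beta_i=t_in_i(r_i-1),$$ where $e$ denotes topological Euler characteristic; equivalently $\nu(\mathcal A)=2+\dfrac{1-\frac1m\sum_i r_i^{-2}}{\frac{2g-2}{m}+1-\frac1m\sum_i r_i^{-1}}$. *)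

From mathcomp Require Import all_boot all_order all_algebra.
Set Implicit Arguments. Unset Strict Implicit. Unset Printing Implicit Defensive.
Import Order.TTheory GRing.Theory Num.Theory.
Local Open Scope ring_scope.

(* Abstract slope of a simple Galois admissible configuration, written exactly
   as the first formula of the paper, in terms of the numerical data
   m, d, (t_i, n_i, r_i) and the topological Euler characteristics
   eX = e(B1 x B2) and eD i = e(D_i).
   beta_i = t_i n_i (r_i - 1) (natural subtraction; r_i >= 2 in use). *)
Definition beta (m : nat) (t n r : 'I_m -> nat) (i : 'I_m) : nat :=
  (t i * n i * (r i - 1))%N.

Definition abstract_slope (R : realFieldType) (m d : nat) (t n r : 'I_m -> nat)
    (eX : int) (eD : 'I_m -> int) : R :=
  2 + (- \sum_(i < m) (t i * n i)%:R
            * ((((r i)%:R - 1) * ((r i)%:R + 1)) / (r i)%:R) * (eD i)%:~R)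
      / (d%:R * eX%:~R - \sum_(i < m) (beta t n r i)%:R * (eD i)%:~R).

From mathcomp Require Import all_boot all_order all_algebra.
From mathcomp Require Import ring lra zify.
Set Implicit Arguments. Unset Strict Implicit. Unset Printing Implicit Defensive.
Import Order.TTheory GRing.Theory Num.Theory.
Local Open Scope ring_scope.

(* With x_i = 1/r_i and d = t_i n_i r_i, the factor d e(B1) cancels from the
   slope, leaving nu = 2 + sum (1 - x_i^2) / (2(g-1) + sum (1 - x_i)).  Hence
   nu <= 2 + 2/3 amounts to sum (3(1 - x_i^2) - 2(1 - x_i)) <= 4(g-1); each
   summand equals 4/3 - 3(x_i - 1/3)^2, so the sum is at most 4m/3 <= 4(g-1),
   with equality exactly when m = 3(g-1) and every x_i = 1/3. *)

Lemma abstract_slope_graphs (R : realFieldType) m d (t n r : 'I_m -> nat)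
    (eB1 eB2 : int) (eD : 'I_m -> int) :
  eB1 != 0 -> (forall i, eD i = eB1) ->
  (forall i, [/\ 0 < t i, 0 < n i, 0 < r i & d = t i * n i * r i]%N) ->
  abstract_slope R d t n r (eB1 * eB2) eD =
  2 + (\sum_(i < m) (1 - (r i)%:R^-1 ^+ 2))
      / (\sum_(i < m) (1 - (r i)%:R^-1) - eB2%:~R).
Proof.
move=> eB1_neq0 eDE data.
case: m => [|m] in t n r eD eDE data *.
  by rewrite /abstract_slope !big_ord0 oppr0 !mul0r.
have d_gt0 : (0 < d)%N.
  by have [t_gt0 n_gt0 r_gt0 ->] := data ord0; rewrite !muln_gt0 t_gt0 n_gt0.
set c : R := d%:R * eB1%:~R.
have c_neq0 : c != 0 by rewrite mulf_neq0 ?pnatr_eq0 ?intr_eq0 -?lt0n.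
have d_factor i : (r i)%:R != 0 :> R /\ d%:R = (t i * n i)%:R * (r i)%:R :> R.
  by have [_ _ r_gt0 ->] := data i; rewrite natrM pnatr_eq0 -lt0n.
rewrite /abstract_slope /beta.
have -> : \sum_(i < m.+1) (t i * n i)%:R * (((r i)%:R - 1) * ((r i)%:R + 1) / (r i)%:R)
           * (eD i)%:~R = c * \sum_(i < m.+1) (1 - (r i)%:R^-1 ^+ 2) :> R.
  rewrite mulr_sumr; apply: eq_bigr => i _; have [r_neq0 d_eq] := d_factor i.
  by rewrite eDE /c d_eq; field.
have -> : \sum_(i < m.+1) (t i * n i * (r i - 1))%:R * (eD i)%:~R
           = c * \sum_(i < m.+1) (1 - (r i)%:R^-1) :> R.
  rewrite mulr_sumr; apply: eq_bigr => i _; have [r_neq0 d_eq] := d_factor i.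
  have [_ _ r_gt0 _] := data i.
  by rewrite eDE /c d_eq natrM natrB //; field.
rewrite rmorphM /= mulrA -/c -mulrBr -mulrN -mulf_div divff // mul1r.
by rewrite -[X in _ / X]opprB invrN mulrNN.
Qed.

Lemma two_plus_ratio_le_two_thirds (R : realFieldType) (S D K : R) :
  0 < D -> 0 <= K -> 2 * D - 3 * S = K ->
  2 + S / D <= 2 + 2 / 3 /\ (2 + S / D = 2 + 2 / 3 <-> K = 0).
Proof.
move=> D_gt0 K_ge0 KE.
have -> : S / D = 2 / 3 - K / (3 * D).
  by rewrite -KE; field; apply: lt0r_neq0.
have KD_ge0 : 0 <= K / (3 * D) by rewrite divr_ge0 // mulr_ge0 // ltW.
split; first lra.
split=> [eq23|->]; last by rewrite mul0r subr0.
have /eqP : K / (3 * D) = 0 by lra.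
by rewrite mulf_eq0 invr_eq0 mulf_eq0 pnatr_eq0 (gt_eqF D_gt0) !orbF => /eqP.
Qed.

Lemma complete_square_third (R : numFieldType) (x : R) :
  3 * (1 - x ^+ 2) - 2 * (1 - x) = 4 / 3 - 3 * (x - 3^-1) ^+ 2.
Proof. by field. Qed.

Lemma sum_complete_square_third (R : numFieldType) m (x : 'I_m -> R) :
  3 * \sum_(i < m) (1 - x i ^+ 2) - 2 * \sum_(i < m) (1 - x i)
  = 4 / 3 * m%:R - 3 * \sum_(i < m) (x i - 3^-1) ^+ 2.
Proof.
rewrite !mulr_sumr -sumrB (eq_bigr _ (fun i _ => @complete_square_third R (x i))).
by rewrite sumrB sumr_const card_ord mulr_natr.
Qed.

Lemma sum_sqr_inv_sub_third_eq0 (R : realFieldType) m (r : 'I_m -> nat) :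
  \sum_(i < m) ((r i)%:R^-1 - 3^-1) ^+ 2 = 0 :> R <-> forall i, r i = 3%N.
Proof.
split=> [sum0 i | r3]; last by apply: big1 => i _; rewrite r3 subrr expr0n.
have := @psumr_eq0P _ _ xpredT _ (fun j _ => sqr_ge0 _) sum0 i isT.
by move=> /eqP; rewrite sqrf_eq0 subr_eq0 => /eqP /invr_inj /eqP; rewrite eqr_nat => /eqP.
Qed.

Lemma sum_one_sub_inv_nat_ge0 (R : numFieldType) m (r : 'I_m -> nat) :
  (forall i, 0 < r i)%N -> 0 <= \sum_(i < m) (1 - (r i)%:R^-1) :> R.
Proof.
move=> r_gt0; apply: sumr_ge0 => i _.
by rewrite subr_ge0 invf_le1 ?ltr0n ?ler1n.
Qed.

Lemma simple_slope_le_two_thirds (R : realFieldType) m (r : 'I_m -> nat) h :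
  (0 < h)%N -> (m <= 3 * h)%N -> (forall i, 0 < r i)%N ->
  let nu : R := 2 + (\sum_(i < m) (1 - (r i)%:R^-1 ^+ 2))
                    / (\sum_(i < m) (1 - (r i)%:R^-1) + 2 * h%:R) in
  nu <= 2 + 2 / 3 /\ (nu = 2 + 2 / 3 <-> m = (3 * h)%N /\ (forall i, r i = 3%N)).
Proof.
move=> h_gt0 m_le r_gt0 nu; rewrite {}/nu.
set S2 := \sum_(i < m) _; set S1 := \sum_(i < m) _.
set Q : R := \sum_(i < m) ((r i)%:R^-1 - 3^-1) ^+ 2.
have Q_ge0 : 0 <= Q by apply: sumr_ge0 => i _; apply: sqr_ge0.
have slack_ge0 : 0 <= 4 / 3 * (3 * h - m)%N%:R :> R by rewrite mulr_ge0 ?divr_ge0.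
have D_gt0 : 0 < S1 + 2 * h%:R.
  by rewrite ltr_wpDl ?sum_one_sub_inv_nat_ge0 // mulr_gt0 ?ltr0n.
have KE : 2 * (S1 + 2 * h%:R) - 3 * S2 = 4 / 3 * (3 * h - m)%N%:R + 3 * Q.
  have := sum_complete_square_third (fun i => (r i)%:R^-1 : R); rewrite -/S1 -/S2 -/Q.
  rewrite natrB // natrM => defect; lra.
have K_ge0 := addr_ge0 slack_ge0 (mulr_ge0 (ler0n _ 3) Q_ge0).
have [bound eq_iff] := two_plus_ratio_le_two_thirds D_gt0 K_ge0 KE.
split=> //; apply: (iff_trans eq_iff).
split=> [/eqP | [m_eq r3]].
  rewrite paddr_eq0 // ?mulr_ge0 // !mulf_eq0 invr_eq0 !pnatr_eq0 /= subn_eq0.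
  move=> /andP [m_ge /eqP Q0]; split; first lia.
  exact/(sum_sqr_inv_sub_third_eq0 R r).
by rewrite m_eq subnn mulr0 add0r /Q (sum_sqr_inv_sub_third_eq0 R r).2 ?mulr0.
Qed.

Theorem proposition5p6 (R : realFieldType)
  (g1 g : nat)              (* genera of B1 and B2 *)
  (eB1 eB2 : int)           (* Euler characteristics of B1 and B2 *)
  (m d : nat) (t n r : 'I_m -> nat)
  (eD : 'I_m -> int)        (* Euler characteristics of the curves D_i *)
  (deg : 'I_m -> nat)       (* degrees of the etale maps B1 -> B2 with graph D_i *)
  : (2 <= g1)%N -> (2 <= g)%N ->
    eB1 = 2 - 2 * (g1 : int) -> eB2 = 2 - 2 * (g : int) ->
    (* D_i is the graph of a map B1 -> B2, hence isomorphic to B1 *)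
    (forall i, eD i = eB1) ->
    (* the map is etale of degree deg i (Riemann--Hurwitz) *)
    (forall i, (0 < deg i)%N /\ eB1 = (deg i : int) * eB2) ->
    (forall i, [/\ (0 < t i)%N, (0 < n i)%N, (2 <= r i)%N & d = (t i * n i * r i)%N]) ->
    (m <= 3 * (g - 1))%N ->
    let nu := abstract_slope R d t n r (eB1 * eB2) eD in
    nu <= 2 + 2 / 3 /\
    (nu = 2 + 2 / 3 <-> m = (3 * (g - 1))%N /\ (forall i, r i = 3%N)).
Proof.
move=> g1_ge2 g_ge2 eB1E eB2E eDE _ data m_le nu.
have r_gt0 i : (0 < r i)%N by have [_ _ r_ge2 _] := data i; lia.
have eB1_neq0 : eB1 != 0 by apply/eqP; rewrite eB1E; lia.
have eB2R : - eB2%:~R = 2 * (g - 1)%N%:R :> R.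
  by rewrite eB2E natrB 1?ltnW // rmorphB rmorphM /=; ring.
rewrite /nu abstract_slope_graphs //; last by move=> i; have [*] := data i.
by rewrite eB2R; apply: simple_slope_le_two_thirds; rewrite // subn_gt0.
Qed.
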